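(* Let $g:\mathbb{R}\times(0,\infty)\times\mathbb{R}\to\mathbb{R}^2$ be the Kalman-filter update of a univariate Gaussian belief $b=(\mu,s)^{\mathrm{T}}$ (mean $\mu\in\mathbb{R}$, variance $s>0$) given an observation $y=x+w$ of the scalar state $x$ corrupted by noise $w\sim\mathcal{N}(0,1)$, i.e. $$g(b,y)=\left(\mu+\frac{s}{s+1}(y-\mu),\; s-\frac{s^2}{s+1}\right)^{\mathrm{T}}.$$ Then there exist constants $K_2,K_3,K_4,K_5\ge0$ and positive integers $L_1,L_2$ such that for all $\mu\in\mathbb{R}$, $s>0$, $y\in\mathbb{R}$, $$\|g(b,y)\|_2\le K_2+K_3\|b\|_2^{L_1}+K_4\|y\|_2^{L_2}+K_5\|b\|_2^{L_1}\|y\|_2^{L_2}$$ and $$\left\|\frac{\partial}{\partial b}g(b,y)\right\|_2\le K_2+K_3\|b\|_2^{L_1}+K_4\|y\|_2^{L_2}+K_5\|b\|_2^{L_1}\|y\|_2^{L_2}.$$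
   Context: $\|\cdot\|_2$ on matrices denotes the operator (spectral) norm induced by the Euclidean norm. *)

From Stdlib Require Import Reals.
From Coquelicot Require Import Coquelicot.
Open Scope R_scope.

Definition g1 (mu s y : R) : R := mu + s / (s + 1) * (y - mu).
Definition g2 (mu s y : R) : R := s - s ^ 2 / (s + 1).

Definition norm2 (a b : R) : R := sqrt (a ^ 2 + b ^ 2).

Definition J11 (mu s y : R) : R := Derive (fun m => g1 m s y) mu.
Definition J12 (mu s y : R) : R := Derive (fun t => g1 mu t y) s.
Definition J21 (mu s y : R) : R := Derive (fun m => g2 m s y) mu.
Definition J22 (mu s y : R) : R := Derive (fun t => g2 mu t y) s.

(* Operator (spectral) norm of the 2x2 matrix [[a, b], [c, d]] induced by the
   Euclidean norm: sup of ||M v||_2 over unit vectors v. *)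
Definition opnorm2 (a b c d : R) : Rbar :=
  Lub_Rbar (fun r => exists v1 v2 : R,
    norm2 v1 v2 = 1 /\ r = norm2 (a * v1 + b * v2) (c * v1 + d * v2)).

Definition pbound (K2 K3 K4 K5 : R) (L1 L2 : nat) (mu s y : R) : R :=
  K2 + K3 * (norm2 mu s) ^ L1 + K4 * (Rabs y) ^ L2
     + K5 * (norm2 mu s) ^ L1 * (Rabs y) ^ L2.

(* With k := 1 / (s + 1), which lies in (0, 1] for s > 0, the update is the
   convex combination g(b, y) = (k mu + (1 - k) y, 1 - k) and the Jacobian is
   [[k, (y - mu) k^2], [0, k^2]].  Bounding the operator norm by the sum of the
   absolute values of the entries, both quantities are at most 2 + |mu| + |y|,
   a bound of the required form with L1 = L2 = 1. *)

From Stdlib Require Import Reals Lra Psatz.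
From Coquelicot Require Import Coquelicot.
Open Scope R_scope.

Lemma norm2_le_Rabs_sum a b : norm2 a b <= Rabs a + Rabs b.
Proof.
  pose proof (Rabs_pos a); pose proof (Rabs_pos b).
  unfold norm2; rewrite <- (sqrt_pow2 (Rabs a + Rabs b)) by lra.
  apply sqrt_le_1_alt.
  rewrite <- (pow2_abs a), <- (pow2_abs b); nra.
Qed.

Lemma Rabs_le_norm2_l a b : Rabs a <= norm2 a b.
Proof.
  unfold norm2; rewrite <- (sqrt_pow2 (Rabs a)) by apply Rabs_pos.
  apply sqrt_le_1_alt; rewrite pow2_abs; nra.
Qed.

Lemma Rabs_le_norm2_r a b : Rabs b <= norm2 a b.
Proof.
  unfold norm2; rewrite <- (sqrt_pow2 (Rabs b)) by apply Rabs_pos.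
  apply sqrt_le_1_alt; rewrite pow2_abs; nra.
Qed.

Lemma Rabs_lin_comb_le a b v1 v2 :
  Rabs v1 <= 1 -> Rabs v2 <= 1 -> Rabs (a * v1 + b * v2) <= Rabs a + Rabs b.
Proof.
  intros Hv1 Hv2; eapply Rle_trans; [apply Rabs_triang|].
  rewrite !Rabs_mult; pose proof (Rabs_pos a); pose proof (Rabs_pos b); nra.
Qed.

Lemma Rabs_convex_comb_le t a b :
  0 <= t <= 1 -> Rabs (t * a + (1 - t) * b) <= Rabs a + Rabs b.
Proof.
  intros Ht; eapply Rle_trans; [apply Rabs_triang|].
  rewrite !Rabs_mult, (Rabs_pos_eq t), (Rabs_pos_eq (1 - t)) by lra.
  pose proof (Rabs_pos a); pose proof (Rabs_pos b); nra.
Qed.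

Lemma opnorm2_le_Rabs_sum a b c d :
  Rbar_le (opnorm2 a b c d) (Rabs a + Rabs b + Rabs c + Rabs d).
Proof.
  unfold opnorm2.
  apply Lub_Rbar_correct; intros r [v1 [v2 [Hunit ->]]]; simpl.
  assert (Hv1 : Rabs v1 <= 1) by (rewrite <- Hunit; apply Rabs_le_norm2_l).
  assert (Hv2 : Rabs v2 <= 1) by (rewrite <- Hunit; apply Rabs_le_norm2_r).
  eapply Rle_trans; [apply norm2_le_Rabs_sum|].
  pose proof (Rabs_lin_comb_le a b v1 v2 Hv1 Hv2).
  pose proof (Rabs_lin_comb_le c d v1 v2 Hv1 Hv2).
  lra.
Qed.

Lemma Rinv_bounds_of_ge1 x : 1 <= x -> 0 < / x <= 1.
Proof.
  intros Hx; split; [apply Rinv_0_lt_compat; lra|].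
  rewrite <- Rinv_1; apply Rinv_le_contravar; lra.
Qed.

Lemma g1_eq mu s y :
  s + 1 <> 0 -> g1 mu s y = / (s + 1) * mu + (1 - / (s + 1)) * y.
Proof. intros Hs; unfold g1; field; exact Hs. Qed.

Lemma g2_eq mu s y : s + 1 <> 0 -> g2 mu s y = 1 - / (s + 1).
Proof. intros Hs; unfold g2; field; exact Hs. Qed.

Lemma J11_eq mu s y : s + 1 <> 0 -> J11 mu s y = / (s + 1).
Proof.
  intros Hs; unfold J11, g1; apply is_derive_unique.
  auto_derive; [exact I|]; field; exact Hs.
Qed.

Lemma J12_eq mu s y : s + 1 <> 0 -> J12 mu s y = (y - mu) * / (s + 1) ^ 2.
Proof.
  intros Hs; unfold J12, g1; apply is_derive_unique.
  auto_derive; [exact Hs|]; field; exact Hs.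
Qed.

Lemma J21_eq mu s y : J21 mu s y = 0.
Proof. unfold J21, g2; apply is_derive_unique; auto_derive; [lra|]; ring. Qed.

Lemma J22_eq mu s y : s + 1 <> 0 -> J22 mu s y = / (s + 1) ^ 2.
Proof.
  intros Hs; unfold J22, g2; apply is_derive_unique.
  auto_derive; [exact Hs|]; field; exact Hs.
Qed.

Lemma norm2_g_le mu s y :
  0 < s -> norm2 (g1 mu s y) (g2 mu s y) <= 1 + Rabs mu + Rabs y.
Proof.
  intros Hs.
  pose proof (Rinv_bounds_of_ge1 (s + 1) ltac:(lra)) as Hk.
  rewrite g1_eq, g2_eq by lra.
  eapply Rle_trans; [apply norm2_le_Rabs_sum|].
  pose proof (Rabs_convex_comb_le (/ (s + 1)) mu y ltac:(lra)).
  rewrite (Rabs_pos_eq (1 - _)) by lra.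
  lra.
Qed.

Lemma opnorm2_jacobian_le mu s y :
  0 < s ->
  Rbar_le (opnorm2 (J11 mu s y) (J12 mu s y) (J21 mu s y) (J22 mu s y))
          (2 + Rabs mu + Rabs y).
Proof.
  intros Hs.
  eapply Rbar_le_trans; [apply opnorm2_le_Rabs_sum|]; simpl.
  pose proof (Rinv_bounds_of_ge1 (s + 1) ltac:(lra)) as Hk.
  pose proof (Rinv_bounds_of_ge1 ((s + 1) ^ 2) ltac:(nra)) as Hk2.
  rewrite J11_eq, J12_eq, J21_eq, J22_eq by lra.
  rewrite Rabs_mult, Rabs_R0, !(Rabs_pos_eq (/ _)) by lra.
  assert (Hdiff : Rabs (y - mu) <= Rabs mu + Rabs y).
  { unfold Rminus; eapply Rle_trans; [apply Rabs_triang|].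
    rewrite Rabs_Ropp; lra. }
  pose proof (Rabs_pos (y - mu)).
  nra.
Qed.

Lemma linear_le_pbound mu s y :
  2 + Rabs mu + Rabs y <= pbound 2 2 1 0 1 1 mu s y.
Proof.
  unfold pbound; rewrite !pow_1.
  pose proof (Rabs_le_norm2_l mu s); pose proof (Rabs_pos mu).
  lra.
Qed.

Theorem proposition1 :
  exists (K2 K3 K4 K5 : R) (L1 L2 : nat),
    0 <= K2 /\ 0 <= K3 /\ 0 <= K4 /\ 0 <= K5 /\ (0 < L1)%nat /\ (0 < L2)%nat /\
    forall mu s y : R, 0 < s ->
      norm2 (g1 mu s y) (g2 mu s y) <= pbound K2 K3 K4 K5 L1 L2 mu s y /\
      Rbar_le (opnorm2 (J11 mu s y) (J12 mu s y) (J21 mu s y) (J22 mu s y))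
              (Finite (pbound K2 K3 K4 K5 L1 L2 mu s y)).
Proof.
  exists 2, 2, 1, 0, 1%nat, 1%nat.
  do 6 (split; [lra || lia|]).
  intros mu s y Hs.
  pose proof (linear_le_pbound mu s y) as Hpbound.
  split.
  - pose proof (norm2_g_le mu s y Hs); lra.
  - eapply Rbar_le_trans; [apply (opnorm2_jacobian_le mu s y Hs)|].
    exact Hpbound.
Qed.
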